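(* Let $(P_n)_{n\ge0}$ be defined by $P_0(m)=m$ and $P_{n+1}(m)=P_n(m+1)+\sum_{i=0}^{n}P_i(m)P_{n-i}(m)$, and write $P_n(m)=\sum_{i=1}^{n+2}p^{(i)}_n m^{n+2-i}$, with $p^{(i)}_n=0$ for $i>n+2$. For every integer $i\ge 1$ let $a_i(z)=\sum_{n\ge 0}p^{(i)}_n z^n$ (a formal power series). Then the following equations hold: \[a_1=z a_1^2+1,\qquad a_1(0)=1,\] \[a_2=z a_1+2z a_1 a_2,\] and for every $i>2$, \[a_i=z^{i-1}\frac{a_1^{(i-2)}}{(i-2)!}+z^{i-2}\frac{a_1^{(i-3)}}{(i-3)!}+z^{i-2}\frac{a_2^{(i-3)}}{(i-3)!} +z\sum_{j=1}^{i-3}\sum_{k=0}^{i-3-j}(-1)^k\binom{k+j-1}{j-1}z^{i-3-j-k}\frac{a_{j+2}^{(i-3-j-k)}}{(i-3-j-k)!} +z\sum_{j=1}^{i}a_j\,a_{i-j+1}.\]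
   Context: $f^{(k)}$ denotes the $k$-th (formal) derivative of $f$ with respect to $z$, $f^{(0)}=f$. The coefficient $p^{(i)}_n$ is the $i$-th leading coefficient of $P_n$ (which has degree $n+1$); equivalently $p^{(i)}_n=c_{n,n+2-i}$, the number of $(n+2-i)$-contexts of size $n$. *)

From HB Require Import structures.
From mathcomp Require Import all_boot all_order all_algebra.
Set Implicit Arguments. Unset Strict Implicit. Unset Printing Implicit Defensive.
Import Order.TTheory GRing.Theory Num.Theory.
Local Open Scope ring_scope.

Definition Pnext (s : seq {poly int}) : {poly int} :=
  (last 0 s) \Po ('X + 1) + \sum_(i < size s) s`_i * s`_(size s - 1 - i).

Fixpoint Pseq (n : nat) : seq {poly int} :=
  match n with
  | 0 => [:: 'X]
  | n'.+1 => rcons (Pseq n') (Pnext (Pseq n'))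
  end.

Definition P (n : nat) : {poly int} := nth 0 (Pseq n) n.

Definition pcoef (i n : nat) : int :=
  if (1 <= i <= n.+2)%N then (P n)`_(n.+2 - i) else 0.

(* Formal power series over rat, as coefficient sequences. *)
Definition fps := nat -> rat.

Definition sadd (f g : fps) : fps := fun n => f n + g n.
Definition smul (f g : fps) : fps := fun n => \sum_(k < n.+1) f k * g (n - k)%N.
Definition sscale (c : rat) (f : fps) : fps := fun n => c * f n.
Definition sconst (c : rat) : fps := fun n => if n == 0%N then c else 0.
(* multiplication by z^k *)
Definition sXk (k : nat) (f : fps) : fps := fun n => if (k <= n)%N then f (n - k)%N else 0.
Definition sderiv (f : fps) : fps := fun n => f n.+1 * n.+1%:R.
Definition sderivn (k : nat) (f : fps) : fps := iter k sderiv f.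
(* z^e * f^{(d)} / d! *)
Definition term (e d : nat) (f : fps) : fps :=
  sXk e (sscale (d`!%:R)^-1 (sderivn d f)).

Definition a (i : nat) : fps := fun n => (pcoef i n)%:~R.

(* p^(i)_n is the coefficient of m^i in the reversal m^(n+2) P_n(1/m) of P_n.
   Reversal is multiplicative and turns the shift m -> m + 1 into a binomial
   convolution, so the recursion of the P_n becomes
     p^(i+1)_(n+1) = sum_l C(n+2-l, i-l) p^(l)_n + sum_t sum_j p^(j)_t p^(i+2-j)_(n-t),
   which is the coefficient of z^(n+1) in the claimed equations: the n-th
   coefficient of z^e f^(e) / e! is C(n, e) f_n, and for l >= 3 the binomial
   C(n+2-l, i-l) is expanded into such coefficients by an alternating identity. *)

From HB Require Import structures.
From mathcomp Require Import all_boot all_order all_algebra.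
From mathcomp Require Import zify ring.
From Stdlib Require Import FunctionalExtensionality.
Set Implicit Arguments. Unset Strict Implicit. Unset Printing Implicit Defensive.
Import Order.TTheory GRing.Theory Num.Theory.
Local Open Scope ring_scope.

Section Reversal.
Variable R : comNzRingType.
Implicit Types (p q : {poly R}) (d : nat).

Definition revp d p : {poly R} := \poly_(k < d.+1) p`_(d - k).

Lemma coef_revp d p k : (revp d p)`_k = if (k <= d)%N then p`_(d - k) else 0.
Proof. by rewrite coef_poly ltnS. Qed.

Lemma coef_revpS d p k : (revp d.+1 p)`_k.+1 = (revp d p)`_k.
Proof. by rewrite !coef_revp ltnS subSS. Qed.

Lemma revp0 d : revp d 0 = 0.
Proof. by apply/polyP => k; rewrite coef_revp !coef0; case: ifP. Qed.

Lemma revpD d : {morph revp d : p q / p + q}.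
Proof. by move=> p q; apply/polyP => k; rewrite coefD !coef_revp coefD; case: ifP; rewrite ?addr0. Qed.

Lemma revp_sum d I (r : seq I) (P : pred I) (F : I -> {poly R}) :
  revp d (\sum_(i <- r | P i) F i) = \sum_(i <- r | P i) revp d (F i).
Proof. exact: (big_morph (revp d) (revpD d) (revp0 d)). Qed.

Lemma revpZ d c p : revp d (c *: p) = c *: revp d p.
Proof. by apply/polyP => k; rewrite coefZ !coef_revp coefZ; case: ifP; rewrite ?mulr0. Qed.

Lemma revpXn d m : (m <= d)%N -> revp d 'X^m = 'X^(d - m).
Proof.
move=> hm; apply/polyP => k; rewrite coef_revp !coefXn.
case: leqP => hk; last by rewrite (_ : (k == (d - m)%N) = false) //; apply/eqP; lia.
by rewrite (_ : ((d - k)%N == m) = (k == (d - m)%N)) //; apply/eqP/eqP; lia.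
Qed.

Lemma poly_expand d p : (size p <= d.+1)%N -> p = \sum_(a < d.+1) p`_a *: 'X^a.
Proof.
move=> hp; rewrite -poly_def; apply/polyP => k; rewrite coef_poly.
by case: ltnP => // hk; rewrite nth_default // (leq_trans hp).
Qed.

Lemma revp_expand d p : (size p <= d.+1)%N -> revp d p = \sum_(a < d.+1) p`_a *: 'X^(d - a).
Proof.
move=> hp; rewrite {1}(poly_expand hp) revp_sum.
by apply: eq_bigr => a _; rewrite revpZ revpXn // -ltnS.
Qed.

Lemma revpM d1 d2 p q : (size p <= d1.+1)%N -> (size q <= d2.+1)%N ->
  revp (d1 + d2) (p * q) = revp d1 p * revp d2 q.
Proof.
move=> hp hq; rewrite (revp_expand hp) (revp_expand hq).
rewrite {1}(poly_expand hp) {1}(poly_expand hq) !mulr_suml revp_sum.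
apply: eq_bigr => a _; rewrite !mulr_sumr revp_sum; apply: eq_bigr => b _.
rewrite -!scalerAl -!scalerAr !scalerA -!exprD revpZ revpXn; last first.
  by have := ltn_ord a; have := ltn_ord b; lia.
by congr (_ *: 'X^_); have := ltn_ord a; have := ltn_ord b; lia.
Qed.

Lemma coef_Xadd1_exp v u : ((('X + 1 : {poly R}) ^+ v)`_u) = ('C(v, u))%:R.
Proof.
elim: v u => [|v IH] u; first by rewrite expr0 coefC; case: u.
rewrite exprSr mulrDr mulr1 coefD coefMX.
by case: u => [|u] /=; rewrite ?add0r IH ?bin0 // !IH binS natrD addrC.
Qed.

Lemma coef_revp_shift d p k : (size p <= d.+1)%N ->
  (revp d (p \Po ('X + 1)))`_k = \sum_(l < k.+1) 'C(d - l, k - l)%:R * (revp d p)`_l.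
Proof.
move=> hp; rewrite coef_revp; case: leqP => hk; last first.
  rewrite big1 // => l _; rewrite coef_revp; case: leqP => hl; last by rewrite mulr0.
  by rewrite bin_small ?mul0r //; have := ltn_ord l; lia.
rewrite coef_comp_poly; under eq_bigr do rewrite coef_Xadd1_exp.
rewrite (big_ord_widen d.+1 (fun v => p`_v * 'C(v, d - k)%:R) hp) big_mkcond /=.
rewrite (eq_bigr (fun v : 'I_d.+1 => p`_v * 'C(v, d - k)%:R)); last first.
  by move=> v _; case: ltnP => // hv; rewrite nth_default ?mul0r.
rewrite -(big_mkord xpredT (fun v => p`_v * 'C(v, d - k)%:R)) big_nat_rev /=.
rewrite (@big_cat_nat _ _ _ k.+1) //= [X in _ + X]big1_seq ?addr0; last first.
  move=> l /andP[_]; rewrite mem_index_iota => hl.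
  by rewrite bin_small ?mulr0 //; lia.
rewrite big_mkord; apply: eq_bigr => l _; have := ltn_ord l => hl.
rewrite coef_revp (_ : l <= d)%N; last by lia.
by rewrite add0n subSS mulrC (_ : (d - k = d - l - (k - l))%N) ?bin_sub //; lia.
Qed.

End Reversal.

Section AlternatingBinomial.
Variable R : comPzRingType.

Let S J X d : R := \sum_(0 <= k < d.+1) (-1) ^+ k * 'C(k + J, J)%:R * 'C(X, d - k)%:R.

Let S_rec J X d : S J.+1 X d.+1 = S J X d.+1 - S J.+1 X d.
Proof.
rewrite /S (big_nat_recl d.+1) // (big_nat_recl d.+1) //= !add0n !binn !subn0.
rewrite !expr0 !mul1r -addrA; congr (_ + _).
rewrite -sumrB; apply: eq_bigr => k _.
rewrite !subSS !addSn !addnS binS natrD exprS -addnS; ring.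
Qed.

Let S_J0 M d : S 0 M.+1 d = 'C(M, d)%:R.
Proof.
elim: d => [|d IH]; first by rewrite /S big_nat1 !bin0 expr0 !mul1r.
have -> : S 0 M.+1 d.+1 = 'C(M.+1, d.+1)%:R - S 0 M.+1 d.
  rewrite /S (big_nat_recl d.+1) //= !subn0 !addn0 !bin0 !expr0 !mul1r.
  congr (_ + _); rewrite -sumrN; apply: eq_bigr => k _.
  by rewrite !addn0 !bin0 subSS exprS; ring.
by rewrite IH binS natrD addrK.
Qed.

(* The coefficient identity behind (1 + z)^-(J+1) (1 + z)^(M+J+1) = (1 + z)^M. *)
Lemma alt_bin_convolution J M d :
  \sum_(0 <= k < d.+1) (-1) ^+ k * 'C(k + J, J)%:R * 'C(M + J.+1, d - k)%:R
  = 'C(M, d)%:R :> R.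
Proof.
rewrite -/(S J (M + J.+1) d).
elim: J M d => [|J IH] M d; first by rewrite addn1 S_J0.
elim: d => [|d IHd]; first by rewrite /S big_nat1 !bin0 binn expr0 !mul1r.
by rewrite S_rec IHd -addSnnS IH binS natrD addrK.
Qed.

End AlternatingBinomial.

Lemma size_Pseq n : size (Pseq n) = n.+1.
Proof. by elim: n => //= n IH; rewrite size_rcons IH. Qed.

Lemma nth_Pseq n k : (k <= n)%N -> nth 0 (Pseq n) k = P k.
Proof.
elim: n => [|n IH] hk; first by move: hk; rewrite leqn0 => /eqP ->.
rewrite /= nth_rcons size_Pseq; case: ltnP => hk2; first exact: IH.
have -> : k = n.+1 by apply/eqP; rewrite eqn_leq hk.
by rewrite eqxx /P /= nth_rcons size_Pseq ltnn eqxx.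
Qed.

Lemma P0 : P 0%N = 'X.
Proof. by []. Qed.

Lemma PS n : P n.+1 = P n \Po ('X + 1) + \sum_(i < n.+1) P i * P (n - i).
Proof.
rewrite {1}/P /= nth_rcons size_Pseq ltnn eqxx /Pnext size_Pseq.
rewrite -nth_last size_Pseq /= nth_Pseq // subn1 /=; congr (_ + _).
by apply: eq_bigr => i _; rewrite !nth_Pseq // ?leq_subr // -ltnS.
Qed.

Lemma size_P n : (size (P n) <= n.+2)%N.
Proof.
elim/ltn_ind: n => -[_|n IH]; first by rewrite P0 size_polyX.
rewrite PS (leq_trans (size_polyD _ _)) // geq_max; apply/andP; split.
  rewrite (leq_trans (size_comp_poly_leq _ _)) // -polyC1 size_XaddC muln1.
  by have := IH n (ltnSn n); lia.
rewrite (leq_trans (size_sum _ _ _)) //; apply/bigmax_leqP => i _.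
rewrite (leq_trans (size_polyMleq _ _)) //.
have := IH i (ltn_ord i); have := IH (n - i)%N (leq_ltn_trans (leq_subr _ _) (ltnSn n)).
by have := ltn_ord i; lia.
Qed.

Lemma pcoefE i n : pcoef i n = (revp n.+2 (P n))`_i.
Proof.
rewrite /pcoef coef_revp; case: i => [|i] //=.
by rewrite subn0 nth_default // size_P.
Qed.

Lemma pcoef_rec N i : pcoef i.+1 N.+1 =
  \sum_(l < i.+1) 'C(N.+2 - l, i - l)%:R * pcoef l N
  + \sum_(t < N.+1) \sum_(j < i.+3) pcoef j t * pcoef (i.+2 - j) (N - t).
Proof.
rewrite !pcoefE PS revpD coefD coef_revpS coef_revp_shift; last exact: leqW (size_P _).
congr (_ + _); first by apply: eq_bigr => l _; rewrite pcoefE.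
rewrite revp_sum coef_sum; apply: eq_bigr => t _.
have hN : N.+4 = (t.+2 + (N - t).+2)%N by have := ltn_ord t; lia.
rewrite -coef_revpS hN revpM ?coefM; try exact: leqW (size_P _).
by apply: eq_bigr => j _; rewrite !pcoefE.
Qed.

Lemma a1_0 : a 1 0%N = 1.
Proof. by rewrite /a /pcoef /= P0 coefX. Qed.

Lemma a2_0 : a 2 0%N = 0.
Proof. by rewrite /a /pcoef /= P0 coefX. Qed.

Lemma a_eq0 i n : (n.+2 < i)%N -> a i n = 0.
Proof. by move=> hi; rewrite /a /pcoef; case: ifP => //; lia. Qed.

Lemma smulC f g n : smul f g n = smul g f n.
Proof.
rewrite /smul -(big_mkord xpredT (fun k => f k * g (n - k)%N)).
rewrite -(big_mkord xpredT (fun k => g k * f (n - k)%N)) big_nat_rev /=.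
apply: eq_big_nat => k /andP[_ hk]; rewrite add0n mulrC; congr (g _ * f _); lia.
Qed.

Lemma a_rec N i : a i.+1 N.+1 =
  \sum_(1 <= l < i.+1) 'C(N.+2 - l, i - l)%:R * a l N
  + \sum_(1 <= j < i.+2) smul (a j) (a (i.+2 - j)) N.
Proof.
rewrite /a pcoef_rec rmorphD !rmorph_sum; congr (_ + _).
  rewrite -(big_mkord xpredT (fun l => (('C(N.+2 - l, i - l)%:R * pcoef l N)%:~R : rat))).
  rewrite big_ltn //= mulr0 add0r.
  by apply: eq_big_nat => l _; rewrite rmorphM rmorph_nat.
under eq_bigr do rewrite rmorph_sum.
rewrite [LHS]exchange_big /=.
rewrite -(big_mkord xpredT (fun j => \sum_(t < N.+1) ((pcoef j t * pcoef (i.+2 - j) (N - t))%:~R : rat))).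
rewrite big_ltn // big_nat_recr //= subnn.
rewrite [X in X + _]big1 ?add0r => [|t _]; last by rewrite mul0r.
rewrite [X in _ + X]big1 ?addr0 => [|t _]; last by rewrite mulr0.
by apply: eq_big_nat => j _; apply: eq_bigr => t _; rewrite rmorphM.
Qed.

Lemma sderivnE d f m : sderivn d f m = f (m + d)%N * ((m + d) ^_ d)%:R.
Proof.
elim: d f m => [|d IH] f m; first by rewrite /sderivn /= addn0 ffactn0 mulr1.
by rewrite /sderivn iterSr -/(sderivn d (sderiv f)) IH /sderiv addnS ffactSS natrM mulrA.
Qed.

Lemma term_diag d f n : term d d f n = 'C(n, d)%:R * f n.
Proof.
rewrite /term /sXk /sscale; case: leqP => h; last by rewrite bin_small // mul0r.
rewrite sderivnE subnK // -bin_ffact natrM.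
have hf : (d`!%:R : rat) != 0 by rewrite pnatr_eq0 -lt0n fact_gt0.
by field.
Qed.

Lemma termSS e d f n : term e.+1 d f n.+1 = term e d f n.
Proof. by rewrite /term /sXk ltnS subSS. Qed.

Lemma a1_funeq : a 1 = sadd (sXk 1 (smul (a 1) (a 1))) (sconst 1).
Proof.
apply: functional_extensionality => -[|N]; first by rewrite /sadd /sXk /sconst /= a1_0 add0r.
by rewrite (a_rec N 0) big_geq // add0r big_nat1 /sadd /sXk /sconst /= !subn1 addr0.
Qed.

Lemma a2_funeq : a 2 = sadd (sXk 1 (a 1)) (sscale 2 (sXk 1 (smul (a 1) (a 2)))).
Proof.
apply: functional_extensionality => -[|N].
  by rewrite /sadd /sXk /sscale a2_0 /= mulr0 addr0.
rewrite (a_rec N 1) big_nat1 big_ltn // big_nat1 /sadd /sXk /sscale /=.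
rewrite bin0 mul1r !subn1 (_ : (3 - 2)%N = 1%N) // (smulC (a 1) (a 2)); ring.
Qed.

Lemma bin_a_alt_term N I j : (1 <= j <= I)%N ->
  'C(N - j, I - j)%:R * a j.+2 N =
  \sum_(0 <= k < I.+1 - j)
     (-1) ^+ k * 'C(k + j - 1, j - 1)%:R * term (I - j - k) (I - j - k) (a j.+2) N.
Proof.
move=> /andP[hj1 hjI]; case: (leqP j N) => hjN; last first.
  rewrite a_eq0 ?mulr0; last by lia.
  by rewrite big1 // => k _; rewrite term_diag a_eq0 ?mulr0 //; lia.
have := alt_bin_convolution rat (j - 1) (N - j) (I - j).
rewrite (_ : (N - j + (j - 1).+1 = N)%N); last by lia.
rewrite (_ : (I.+1 - j = (I - j).+1)%N); last by lia.
move=> <-; rewrite mulr_suml; apply: eq_big_nat => k _.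
by rewrite term_diag mulrA (_ : (k + j - 1 = k + (j - 1))%N) //; lia.
Qed.

Lemma a_funeq i : (2 < i)%N ->
  a i = fun n =>
    term (i - 1) (i - 2) (a 1) n
    + term (i - 2) (i - 3) (a 1) n
    + term (i - 2) (i - 3) (a 2) n
    + sXk 1 (fun m => \sum_(1 <= j < i - 2) \sum_(0 <= k < i - 2 - j)
          ((-1) ^+ k * ('C(k + j - 1, j - 1))%:R
           * term (i - 3 - j - k) (i - 3 - j - k) (a (j + 2)) m)) n
    + sXk 1 (fun m => \sum_(1 <= j < i.+1) smul (a j) (a (i - j + 1)) m) n.
Proof.
move=> hi; have [I ->] : exists I, i = I.+3 by exists (i - 3)%N; lia.
rewrite !subSS !subn0.
apply: functional_extensionality => -[|N]; first by rewrite a_eq0 // /term /sXk.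
rewrite (a_rec N I.+2) !termSS !term_diag /sXk /= !subn1 /=.
rewrite big_ltn // big_ltn // -[3%N]/(1 + 2)%N big_addn subSS subn0.
rewrite (eq_big_nat _ _ (F1 := fun j => smul (a j) (a (I.+4 - j)) N)
                        (F2 := fun j => smul (a j) (a (I.+3 - j + 1)) N)); last first.
  by move=> j /andP[_ hj]; congr (smul _ (a _) N); lia.
congr (_ + _).
rewrite (eq_big_nat _ _ (F2 := fun j => \sum_(0 <= k < I.+1 - j)
      ((-1) ^+ k * 'C(k + j - 1, j - 1)%:R * term (I - j - k) (I - j - k) (a (j + 2)) N))); last first.
  by move=> j /andP[hj1 hj2]; rewrite addn2 -bin_a_alt_term ?subSS //; lia.
rewrite !subSS !subn0 binS natrD; ring.
Qed.

Theorem theorem1 :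
  [/\ a 1 = sadd (sXk 1 (smul (a 1) (a 1))) (sconst 1),
      a 1 0%N = 1,
      a 2 = sadd (sXk 1 (a 1)) (sscale 2 (sXk 1 (smul (a 1) (a 2))))
    & forall i : nat, (2 < i)%N ->
      a i = fun n =>
        term (i - 1) (i - 2) (a 1) n
        + term (i - 2) (i - 3) (a 1) n
        + term (i - 2) (i - 3) (a 2) n
        + sXk 1 (fun m => \sum_(1 <= j < i - 2) \sum_(0 <= k < i - 2 - j)
              ((-1) ^+ k * ('C(k + j - 1, j - 1))%:R
               * term (i - 3 - j - k) (i - 3 - j - k) (a (j + 2)) m)) n
        + sXk 1 (fun m => \sum_(1 <= j < i.+1) smul (a j) (a (i - j + 1)) m) n].
Proof. split; [exact: a1_funeq | exact: a1_0 | exact: a2_funeq | exact: a_funeq]. Qed.
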